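(* Let $\mathcal{M}=(E,\rho)$ be a $q$-matroid and $\mathcal{Z}=\mathcal{Z}(\mathcal{M})$. Then for all subspaces $V\le E$, \[ \rho(V)=\min_{Z\in\mathcal{Z}}\Big(\rho(Z)+\dim\big((V+Z)/Z\big)\Big). \]
   Context: Let $\mathbb{F}=\mathbb{F}_q$, $E$ a finite-dimensional $\mathbb{F}$-vector space. A $q$-matroid is $\mathcal{M}=(E,\rho)$ with $\rho$ from subspaces of $E$ to $\mathbb{Z}_{\ge0}$ satisfying $0\le\rho(V)\le\dim V$, monotonicity, and submodularity $\rho(V+W)+\rho(V\cap W)\le\rho(V)+\rho(W)$. A flat is $F$ with $\rho(F+\langle x\rangle)>\rho(F)$ for all $x\in E\setminus F$. The cyclic core is $\mathrm{cyc}(V)=\{x\in V\mid\rho(W)=\rho(V)\text{ for all }W\le V\text{ with }W+\langle x\rangle=V\}$; $V$ is cyclic if $\mathrm{cyc}(V)=V$. $\mathcal{Z}(\mathcal{M})$ is the set of cyclic flats. *)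

From HB Require Import structures.
From mathcomp Require Import all_boot all_order all_algebra all_field.
Set Implicit Arguments. Unset Strict Implicit. Unset Printing Implicit Defensive.
Import GRing.Theory.
Local Open Scope ring_scope.

Section QMatroid.
Variables (F : finFieldType) (E : vectType F).

Definition is_qmatroid (rho : {vspace E} -> nat) : Prop :=
  [/\ (forall V : {vspace E}, (rho V <= \dim V)%N),
      (forall V W : {vspace E}, (V <= W)%VS -> (rho V <= rho W)%N) &
      (forall V W : {vspace E},
          (rho (V + W)%VS + rho (V :&: W)%VS <= rho V + rho W)%N)].

Definition is_flat (rho : {vspace E} -> nat) (Fl : {vspace E}) : Prop :=
  forall x : E, x \notin Fl -> (rho Fl < rho (Fl + <[x]>)%VS)%N.

Definition in_cyc (rho : {vspace E} -> nat) (V : {vspace E}) (x : E) : Prop :=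
  x \in V /\
  forall W : {vspace E}, (W <= V)%VS -> (W + <[x]>)%VS = V -> rho W = rho V.

Definition is_cyclic (rho : {vspace E} -> nat) (V : {vspace E}) : Prop :=
  forall x : E, x \in V -> in_cyc rho V x.

Definition is_cyclic_flat (rho : {vspace E} -> nat) (Z : {vspace E}) : Prop :=
  is_cyclic rho Z /\ is_flat rho Z.

(* dim((V+Z)/Z) *)
Definition quot_dim (V Z : {vspace E}) : nat := (\dim (V + Z)%VS - \dim Z)%N.

End QMatroid.

(* The lower bound is submodularity: rho (V + Z) <= rho Z + dim (V + Z)/Z.
   For attainment, start from Z = V and improve Z while it is not a cyclic
   flat, never increasing rho Z + dim (V + Z)/Z: if Z is not a flat, add a
   vector x with rho (Z + <x>) = rho Z; if Z is not cyclic, pass to a W with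
   W + <x> = Z and rho W < rho Z, so rho W = rho Z - 1 while the quotient
   dimension grows by at most one.  The first move raises dim Z at constant
   rank, the second lowers the rank, so the process terminates. *)
From HB Require Import structures.
From mathcomp Require Import all_boot all_order all_algebra all_field.
From mathcomp Require Import zify.
From Stdlib Require Import Classical.
Set Implicit Arguments. Unset Strict Implicit.

Section QuotientDimension.
Variables (F : finFieldType) (E : vectType F).
Implicit Types U V W Z : {vspace E}.

Lemma quot_dimE V Z : quot_dim V Z = \dim (V :\: Z).
Proof. by rewrite /quot_dim; have := dimv_cap_compl V Z; have := dimv_sum_cap V Z; lia. Qed.

Lemma quot_dim_antitone V Z Z' : (Z <= Z')%VS -> (quot_dim V Z' <= quot_dim V Z)%N.
Proof.
move=> sZZ'; rewrite /quot_dim.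
have sumZ' : (V + Z + Z' = V + Z')%VS.
  by rewrite -addvA (addv_idPr sZZ').
have := dimv_sum_cap (V + Z)%VS Z'; rewrite sumZ'.
have : (\dim Z <= \dim ((V + Z) :&: Z'))%N by apply: dimvS; rewrite subv_cap addvSr.
have := dimvS (addvSr V Z); have := dimvS (addvSr V Z').
lia.
Qed.

Lemma quot_dim_addv_le V W U : (quot_dim V W <= quot_dim V (W + U) + \dim U)%N.
Proof.
rewrite /quot_dim; have [dimWU _] := dimv_add_leqif W U.
by have := dimvS (addvS (subvv V) (addvSl W U)); lia.
Qed.

End QuotientDimension.

Section QMatroidRank.
Variables (F : finFieldType) (E : vectType F) (rho : {vspace E} -> nat).
Hypothesis rho_qmatroid : is_qmatroid rho.
Implicit Types U V W Z : {vspace E}.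

Lemma rho_le_dim V : (rho V <= \dim V)%N.
Proof. by case: rho_qmatroid. Qed.

Lemma rho_monotone V W : (V <= W)%VS -> (rho V <= rho W)%N.
Proof. by case: rho_qmatroid => _ + _; apply. Qed.

Lemma rho_submod V W : (rho (V + W)%VS + rho (V :&: W)%VS <= rho V + rho W)%N.
Proof. by case: rho_qmatroid => _ _; apply. Qed.

Lemma rho_addv_le U W : (rho (U + W)%VS <= rho U + \dim W)%N.
Proof. by have := rho_submod U W; have := rho_le_dim W; lia. Qed.

Lemma rho_addv_line_le U (x : E) : (rho (U + <[x]>)%VS <= (rho U).+1)%N.
Proof. by apply: leq_trans (rho_addv_le U <[x]>) _; rewrite dim_vline -addn1 leq_add2l leq_b1. Qed.

Lemma rho_le_quot_dim V Z : (rho V <= rho Z + quot_dim V Z)%N.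
Proof.
apply: leq_trans (rho_monotone (addvSl V Z)) _.
by rewrite -addv_diff addvC quot_dimE rho_addv_le.
Qed.

Lemma not_cyclic_flatP Z :
  ~ is_cyclic_flat rho Z ->
  (exists2 x : E, x \notin Z & rho (Z + <[x]>)%VS = rho Z) \/
  (exists x : E, exists2 W, (W <= Z)%VS & (W + <[x]>)%VS = Z /\ rho W <> rho Z).
Proof.
move=> not_cf; apply: NNPP => /not_or_and [not_flat not_cyclic]; apply: not_cf; split.
- move=> x xZ; split=> // W sWZ defZ.
  by apply: NNPP => neq_rho; apply: not_cyclic; exists x, W.
- move=> x xZ; rewrite ltnNge; apply/negP => le_rho; apply: not_flat.
  by exists x => //; apply/anti_leq; rewrite le_rho rho_monotone ?addvSl.
Qed.

Lemma flat_step V Z (x : E) :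
  x \notin Z -> rho (Z + <[x]>)%VS = rho Z ->
  [/\ (\dim Z < \dim (Z + <[x]>))%N &
      (rho (Z + <[x]>)%VS + quot_dim V (Z + <[x]>) <= rho Z + quot_dim V Z)%N].
Proof.
move=> xZ eq_rho; split.
  rewrite (ltn_leqif (dimv_leqif_eq (addvSl Z <[x]>))).
  by apply: contra xZ => /eqP->; apply: subvP (addvSr Z _) _ (memv_line x).
by rewrite eq_rho leq_add2l quot_dim_antitone ?addvSl.
Qed.

Lemma cyclic_step V W Z (x : E) :
  (W <= Z)%VS -> (W + <[x]>)%VS = Z -> rho W <> rho Z ->
  [/\ (rho W < rho Z)%N & (rho W + quot_dim V W <= rho Z + quot_dim V Z)%N].
Proof.
move=> sWZ defZ neq_rho.
have lt_rho : (rho W < rho Z)%N by rewrite ltn_neqAle rho_monotone // andbT; apply/eqP.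
have rhoZ := rho_addv_line_le W x; rewrite defZ in rhoZ.
have := quot_dim_addv_le V W <[x]>; rewrite defZ dim_vline.
by split=> //; move: (x != 0%R); lia.
Qed.

(* Lexicographic in (rho Z, codim Z), since codim Z <= dim E. *)
Definition descent_measure Z : nat :=
  (rho Z * (\dim {:E}).+1 + (\dim {:E} - \dim Z))%N.

Lemma descent_step V Z :
  ~ is_cyclic_flat rho Z ->
  exists2 Z', (descent_measure Z' < descent_measure Z)%N &
    (rho Z' + quot_dim V Z' <= rho Z + quot_dim V Z)%N.
Proof.
rewrite /descent_measure => /not_cyclic_flatP [[x xZ eq_rho] | [x [W sWZ [defZ neq_rho]]]].
- have [lt_dim le_val] := flat_step V xZ eq_rho.
  exists (Z + <[x]>)%VS => //; rewrite eq_rho ltn_add2l.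
  by have := dimvS (subvf (Z + <[x]>)%VS); lia.
- have [lt_rho le_val] := cyclic_step V sWZ defZ neq_rho.
  exists W => //.
  have : (rho W * (\dim {:E}).+1 + (\dim {:E}).+1 <= rho Z * (\dim {:E}).+1)%N.
    by rewrite -mulSnr leq_mul2r lt_rho orbT.
  lia.
Qed.

Lemma exists_cyclic_flat_le V Z :
  exists2 Z', is_cyclic_flat rho Z' &
    (rho Z' + quot_dim V Z' <= rho Z + quot_dim V Z)%N.
Proof.
have [m] := ubnP (descent_measure Z); elim: m Z => // m IHm Z ltZm.
have [cfZ | ncfZ] := classic (is_cyclic_flat rho Z); first by exists Z.
have [Z' ltZ' leZ'] := descent_step V ncfZ.
have [Z'' cfZ'' leZ''] := IHm Z' (leq_trans ltZ' ltZm).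
by exists Z'' => //; apply: leq_trans leZ'' leZ'.
Qed.

End QMatroidRank.

Theorem corollary4p6 (F : finFieldType) (E : vectType F)
  (rho : {vspace E} -> nat) (Hrho : is_qmatroid rho) (V : {vspace E}) :
  (exists2 Z : {vspace E}, is_cyclic_flat rho Z & rho V = (rho Z + quot_dim V Z)%N) /\
  (forall Z : {vspace E}, is_cyclic_flat rho Z -> (rho V <= rho Z + quot_dim V Z)%N).
Proof.
split; last by move=> Z _; apply: rho_le_quot_dim.
have [Z cfZ leZ] := exists_cyclic_flat_le Hrho V V.
exists Z => //; apply/anti_leq; rewrite rho_le_quot_dim //=.
by move: leZ; rewrite /quot_dim addvv subnn addn0.
Qed.
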